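(* Let $\Gamma_{\mathrm{comp}}$ be the set of all sufficiently pure branches $A$ such that every finite subset of $A$ is satisfiable. Then $\Gamma_{\mathrm{comp}}$ is a complete abstract consistency class.
   Context: Types: a countable set of base types including a distinguished $o$; other base types are sorts ($\alpha$). Types: base types and $\sigma\tau$ (functions from $\sigma$ to $\tau$; $\sigma\tau\mu=\sigma(\tau\mu)$). Countably many names, each with a unique type, infinitely many of each type. Terms: names; $st:\mu$ for $s:\tau\mu,t:\tau$; $\lambda x.t:\sigma\tau$ for a name $x:\sigma$, $t:\tau$. Logical constants: $\neg:oo$, $=_\sigma:\sigma\sigma o$; other names are variables. Formulas: terms of type $o$; $s=_\sigma t$ is $(=_\sigma s)t$; $s\neq_\sigma t$ is $\neg(s=_\sigma t)$. Semantics: a frame $\mathcal{D}$ maps types to nonempty sets with $\mathcal{D}(\sigma\tau)\subseteq(\mathcal{D}\sigma\to\mathcal{D}\tau)$. An assignment $\mathcal{I}$ into $\mathcal{D}$ extends $\mathcal{D}$ and maps names $x:\sigma$ into $\mathcal{D}\sigma$; $\mathcal{I}^x_a$ is the update. Partial evaluation: $\hat{\mathcal{I}}x=\mathcal{I}x$; $\hat{\mathcal{I}}(st)=(\hat{\mathcal{I}}s)(\hat{\mathcal{I}}t)$ when defined; $\hat{\mathcal{I}}(\lambda x.s)=f$ if $\lambda x.s:\sigma\tau$, $f\in\mathcal{D}(\sigma\tau)$ and $\widehat{\mathcal{I}^x_a}s=fa$ for all $a\in\mathcal{D}\sigma$. Interpretation: assignment with total evaluation. Logical: $\mathcal{I}o=\{0,1\}$,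 $\mathcal{I}(\neg)$ negation, $\mathcal{I}(=_\sigma)$ identity. A set of formulas is satisfiable if some logical interpretation evaluates all of them to $1$. Normalization: fixed type-preserving total $[\cdot]$; $s$ normal iff $[s]=s$; $[[s]]=[s]$; $[[s]t]=[st]$; $[xs_1\dots s_n]=x[s_1]\dots[s_n]$ for a name $x$, $n\ge0$, $xs_1\dots s_n$ of base type; $\hat{\mathcal{I}}[s]=\hat{\mathcal{I}}s$ for every interpretation $\mathcal{I}$. A branch is a set of normal formulas. A branch $A$ is sufficiently pure if for every type $\sigma$ there are infinitely many variables of type $\sigma$ not occurring free in the formulas of $A$. An abstract consistency class is a set $\Gamma$ of branches such that every $A\in\Gamma$ satisfies ($x$ ranges over variables): (DN) if $\neg\neg s\in A$ then $A\cup\{s\}\in\Gamma$; (BQ) if $s=_ot\in A$ then $A\cup\{s,t\}\in\Gamma$ or $A\cup\{\neg s,\neg t\}\in\Gamma$; (BE) if $s\neq_ot\in A$ then $A\cup\{s,\neg t\}\in\Gamma$ or $A\cup\{\neg s,t\}\in\Gamma$; (FQ) if $s=_{\sigma\tau}t\in A$ then $A\cup\{[su]=[tu]\}\in\Gamma$ for every normal $u:\sigma$; (FE) if $s\neq_{\sigma\tau}t\in A$ then $A\cup\{[sx]\neq[tx]\}\in\Gamma$ for some variable $x$; (Mat) if $xs_1\dots s_n,\neg xt_1\dots t_n\in A$ then $n\ge1$ and $A\cup\{s_i\neq t_i\}\in\Gamma$ for some $i$; (Dec) if $xs_1\dots s_n\neq_\alpha xt_1\dots t_n\in A$ then $n\ge1$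 and $A\cup\{s_i\neq t_i\}\in\Gamma$ for some $i$; (Con) if $s=_\alpha t,u\neq_\alpha v\in A$ then $A\cup\{s\neq u,t\neq u\}\in\Gamma$ or $A\cup\{s\neq v,t\neq v\}\in\Gamma$. $\Gamma$ is complete if for all $A\in\Gamma$ and normal formulas $s$, $A\cup\{s\}\in\Gamma$ or $A\cup\{\neg s\}\in\Gamma$. *)

From Stdlib Require Import List Arith.
Import ListNotations.
Set Implicit Arguments.

Inductive ty : Type :=
| Base : nat -> ty
| Arr : ty -> ty -> ty.

Definition o : ty := Base 0.
Definition is_sort (s : ty) : Prop := exists k, s = Base (S k).

Definition ty_eq_dec (s t : ty) : {s = t} + {s <> t}.
Proof. decide equality; apply Nat.eq_dec. Defined.

Inductive name : Type :=
| NVar : ty -> nat -> name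
| NNeg : name
| NEq : ty -> name.

Definition nty (x : name) : ty :=
  match x with
  | NVar s _ => s
  | NNeg => Arr o o
  | NEq s => Arr s (Arr s o)
  end.

Definition is_var (x : name) : Prop := exists s n, x = NVar s n.

Definition name_eq_dec (x y : name) : {x = y} + {x <> y}.
Proof. decide equality; try apply ty_eq_dec; apply Nat.eq_dec. Defined.

Inductive tm : ty -> Type :=
| Nm : forall x : name, tm (nty x)
| App : forall s t, tm (Arr s t) -> tm s -> tm t
| Lam : forall (x : name) t, tm t -> tm (Arr (nty x) t).

Arguments App {s t} _ _.
Arguments Lam x {t} _.

Definition Neg (s : tm o) : tm o := App (Nm NNeg : tm (Arr o o)) s.
Definition Eqt {s : ty} (a b : tm s) : tm o :=
  App (App (Nm (NEq s) : tm (Arr s (Arr s o))) a) b.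
Definition Neqt {s : ty} (a b : tm s) : tm o := Neg (Eqt a b).

Fixpoint free_in (x : name) {s} (t : tm s) : Prop :=
  match t with
  | Nm y => x = y
  | App u v => free_in x u \/ free_in x v
  | Lam y b => x <> y /\ free_in x b
  end.

(* A frame: nonempty domains with D(s t) included (via the extensional,
   hence injective, application map) in the function space D s -> D t. *)
Record Frame : Type := {
  dom : ty -> Type;
  dom_ne : forall s, inhabited (dom s);
  app : forall s t, dom (Arr s t) -> dom s -> dom t;
  app_ext : forall s t (f g : dom (Arr s t)),
      (forall a, app f a = app g a) -> f = g
}.
Arguments app {_ s t} _ _.

Definition asg (F : Frame) : Type := forall x : name, dom F (nty x).

Definition upd (F : Frame) (I : asg F) (x : name) (a : dom F (nty x)) : asg F :=
  fun y => match name_eq_dec x y with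
           | left e => eq_rect x (fun z => dom F (nty z)) a y e
           | right _ => I y
           end.

(* Partial evaluation, as a relation: ev t I a  means  \hat I t = a. *)
Fixpoint ev (F : Frame) {s} (t : tm s) : asg F -> dom F s -> Prop :=
  match t in tm s0 return asg F -> dom F s0 -> Prop with
  | Nm x => fun I a => a = I x
  | App u v => fun I b =>
      exists f a, ev u I f /\ ev v I a /\ b = app f a
  | Lam x body => fun I f =>
      forall a, ev body (upd I x a) (app f a)
  end.

Definition interp (F : Frame) (I : asg F) : Prop :=
  forall s (t : tm s), exists a, ev t I a.

(* Logical interpretation, relative to the identification tv of D o with
   {0,1} (= bool): tv is a bijection, ~ is negation, =_s is identity. *)
Definition logical (F : Frame) (I : asg F) (tv : dom F o -> bool) : Prop :=
  interp I /\
  (forall a b, tv a = tv b -> a = b) /\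
  (forall bb, exists a, tv a = bb) /\
  (forall a, tv (@app F o o (I NNeg) a) = negb (tv a)) /\
  (forall s (a b : dom F s),
      tv (@app F s o (@app F s (Arr s o) (I (NEq s)) a) b) = true <-> a = b).

Definition satisfiable (S : tm o -> Prop) : Prop :=
  exists (F : Frame) (I : asg F) (tv : dom F o -> bool),
    logical I tv /\ forall s, S s -> exists a, ev s I a /\ tv a = true.

Definition nfop : Type := forall s, tm s -> tm s.

Fixpoint is_spine {s} (t : tm s) : bool :=
  match t with
  | Nm _ => true
  | App u _ => is_spine u
  | Lam _ _ => false
  end.

Fixpoint map_args (nf : nfop) {s} (t : tm s) : tm s :=
  match t in tm s0 return tm s0 with
  | Nm x => Nm x
  | App u v => App (map_args nf u) (nf _ v)
  | Lam x b => Lam x b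
  end.

Record NormAx (nf : nfop) : Prop := {
  nf_idem : forall s (t : tm s), nf s (nf s t) = nf s t;
  nf_app : forall s t (u : tm (Arr s t)) (v : tm s),
      nf t (App (nf _ u) v) = nf t (App u v);
  nf_spine : forall b (t : tm (Base b)), is_spine t = true ->
      nf _ t = map_args nf t;
  nf_sound : forall (F : Frame) (I : asg F), interp I ->
      forall s (t : tm s) a, ev (nf s t) I a <-> ev t I a
}.

Definition normal (nf : nfop) {s} (t : tm s) : Prop := nf s t = t.

Definition branch (nf : nfop) (A : tm o -> Prop) : Prop :=
  forall s, A s -> normal nf s.

Definition suff_pure (A : tm o -> Prop) : Prop :=
  forall (s : ty) (N : nat), exists n, N <= n /\
    ~ (exists f, A f /\ free_in (NVar s n) f).

Definition add (A : tm o -> Prop) (s : tm o) : tm o -> Prop :=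
  fun u => A u \/ u = s.

(* x s1 ... sn  and  x t1 ... tn  with the same head x, and
   l = [s1 <> t1; ...; sn <> tn] *)
Inductive Spines (x : name) : forall s, tm s -> tm s -> list (tm o) -> Prop :=
| SpNil : Spines x (Nm x) (Nm x) nil
| SpApp : forall s t (u v : tm (Arr s t)) (a b : tm s) l,
    Spines x u v l -> Spines x (App u a) (App v b) (l ++ [Neqt a b]).

Definition ACC (nf : nfop) (G : (tm o -> Prop) -> Prop) : Prop :=
  forall A, G A ->
  (forall s, A (Neg (Neg s)) -> G (add A s)) /\
  (forall s t : tm o, A (Eqt s t) ->
     G (add (add A s) t) \/ G (add (add A (Neg s)) (Neg t))) /\
  (forall s t : tm o, A (Neqt s t) ->
     G (add (add A s) (Neg t)) \/ G (add (add A (Neg s)) t)) /\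
  (forall sg tau (s t : tm (Arr sg tau)), A (Eqt s t) ->
     forall u : tm sg, normal nf u ->
       G (add A (Eqt (nf _ (App s u)) (nf _ (App t u))))) /\
  (forall sg tau (s t : tm (Arr sg tau)), A (Neqt s t) ->
     exists n, G (add A (Neqt (nf _ (App s (Nm (NVar sg n) : tm sg)))
                              (nf _ (App t (Nm (NVar sg n) : tm sg)))))) /\
  (forall x (u v : tm o) l, is_var x -> Spines x u v l ->
     A u -> A (Neg v) ->
     l <> nil /\ exists d, In d l /\ G (add A d)) /\
  (forall x al (u v : tm al) l, is_var x -> is_sort al -> Spines x u v l ->
     A (Neqt u v) ->
     l <> nil /\ exists d, In d l /\ G (add A d)) /\
  (forall al (s t u v : tm al), is_sort al -> A (Eqt s t) -> A (Neqt u v) ->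
     G (add (add A (Neqt s u)) (Neqt t u)) \/
     G (add (add A (Neqt s v)) (Neqt t v))).

Definition complete_class (nf : nfop) (G : (tm o -> Prop) -> Prop) : Prop :=
  forall A, G A -> forall s : tm o, normal nf s -> G (add A s) \/ G (add A (Neg s)).

Definition Gcomp (nf : nfop) (A : tm o -> Prop) : Prop :=
  branch nf A /\ suff_pure A /\
  forall l : list (tm o), (forall s, In s l -> A s) ->
    satisfiable (fun s => In s l).

From Pilot Require Import Defs.
From Stdlib Require Import List Lia Classical Eqdep_dec.
Import ListNotations.

(* Every tableau rule of an abstract consistency class is semantically sound:
   a logical interpretation satisfying its premises satisfies one of its
   alternatives.  By compactness this lifts to finite satisfiability: if
   A ∪ c were not finitely satisfiable for any alternative c, then finitely
   many witnesses from A together with the premises would form a finite,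
   hence satisfiable, subset of A whose model satisfies no alternative.
   Normality and purity of the extended branch are syntactic.  The rule (FE)
   is the only one not of this shape: a variable fresh for A can be
   reinterpreted in a model of any finite subset as a point where the two
   unequal functions differ. *)

Lemma App_inj s t (u u' : tm (Arr s t)) (v v' : tm s) :
  App u v = App u' v' -> u = u' /\ v = v'.
Proof.
  intro H. injection H as Hu Hv.
  apply inj_pair2_eq_dec in Hu; [|exact ty_eq_dec].
  apply inj_pair2_eq_dec in Hu; [|exact ty_eq_dec].
  apply inj_pair2_eq_dec in Hv; [|exact ty_eq_dec].
  auto.
Qed.

Lemma Spines_is_spine {x s} {u v : tm s} {l} :
  Spines x u v l -> is_spine u = true /\ is_spine v = true.
Proof. induction 1; simpl; auto. Qed.

Section Normality.

Context {nf : nfop} (Hnf : NormAx nf).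

Lemma normal_Neg_iff s : normal nf (Neg s) <-> normal nf s.
Proof.
  unfold normal. change o with (Base 0).
  rewrite (nf_spine Hnf (Neg s) eq_refl); simpl.
  split; [intros H; apply App_inj in H as [_ H]; exact H|].
  intros H. change o with (Base 0). rewrite H. reflexivity.
Qed.

Lemma normal_Eqt_iff {sg} (a b : tm sg) :
  normal nf (Eqt a b) <-> normal nf a /\ normal nf b.
Proof.
  unfold normal. change o with (Base 0).
  rewrite (nf_spine Hnf (Eqt a b) eq_refl); simpl. split.
  - intros H. apply App_inj in H as [H Hb]. apply App_inj in H as [_ Ha]. auto.
  - intros [Ha Hb]. change o with (Base 0). rewrite Ha, Hb. reflexivity.
Qed.

Lemma normal_Neqt_iff {sg} (a b : tm sg) :
  normal nf (Neqt a b) <-> normal nf a /\ normal nf b.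
Proof. unfold Neqt. rewrite normal_Neg_iff. apply normal_Eqt_iff. Qed.

Lemma Spines_map_args_normal {x s} {u v : tm s} {l} : Spines x u v l ->
  map_args nf u = u -> map_args nf v = v -> forall d, In d l -> normal nf d.
Proof.
  induction 1 as [|s t u v a b l HS IH]; simpl; [intros _ _ d []|].
  intros Hu Hv d Hd.
  apply App_inj in Hu as [Hu Ha]. apply App_inj in Hv as [Hv Hb].
  apply in_app_or in Hd as [Hd|[<-|[]]]; [exact (IH Hu Hv d Hd)|].
  apply normal_Neqt_iff. auto.
Qed.

Lemma Spines_normal {x b} {u v : tm (Base b)} {l} : Spines x u v l ->
  normal nf u -> normal nf v -> forall d, In d l -> normal nf d.
Proof.
  intros HS Hu Hv. destruct (Spines_is_spine HS) as [Su Sv].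
  apply (Spines_map_args_normal HS).
  - rewrite <- (nf_spine Hnf u Su). exact Hu.
  - rewrite <- (nf_spine Hnf v Sv). exact Hv.
Qed.

End Normality.

Definition extend (A : tm o -> Prop) (c : list (tm o)) : tm o -> Prop :=
  fun u => A u \/ In u c.

Lemma free_var_bound sg {s} (t : tm s) :
  exists B, forall n, free_in (NVar sg n) t -> n < B.
Proof.
  induction t as [x|s t u [B1 H1] v [B2 H2]|x t u [B H]].
  - exists (match x with NVar _ m => S m | _ => 0 end).
    intros n Hn. simpl in Hn. subst x. lia.
  - exists (B1 + B2). intros n [Hn|Hn]; [apply H1 in Hn|apply H2 in Hn]; lia.
  - exists B. intros n [_ Hn]. auto.
Qed.

Lemma free_var_bound_list sg (c : list (tm o)) :
  exists B, forall n u, In u c -> free_in (NVar sg n) u -> n < B.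
Proof.
  induction c as [|u c [B HB]]; [exists 0; intros n u []|].
  destruct (free_var_bound sg u) as [Bu HBu]. exists (Bu + B).
  intros n w [<-|Hw] Hn; [apply HBu in Hn|apply (HB n w) in Hn]; auto; lia.
Qed.

Lemma suff_pure_sub {A B : tm o -> Prop} :
  (forall u, B u -> A u) -> suff_pure A -> suff_pure B.
Proof.
  intros HBA HA sg N. destruct (HA sg N) as (n & Hn & Hfresh).
  exists n. split; [exact Hn|]. intros (f & Hf & Hfree). eauto.
Qed.

Lemma suff_pure_extend A c : suff_pure A -> suff_pure (extend A c).
Proof.
  intros HA sg N. destruct (free_var_bound_list sg c) as [B HB].
  destruct (HA sg (N + B)) as (n & Hn & Hfresh). exists n. split; [lia|].
  intros (f & [Hf|Hf] & Hfree); [eauto|]. apply (HB n f) in Hfree; auto. lia.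
Qed.

Definition holds {F : Frame} (I : asg F) (tv : dom F o -> bool) (u : tm o) : Prop :=
  exists a, ev u I a /\ tv a = true.

Definition holds_all {F : Frame} (I : asg F) (tv : dom F o -> bool) (c : list (tm o)) :
  Prop := forall u, In u c -> holds I tv u.

Section Semantics.

Context {F : Frame} {I : asg F} {tv : dom F o -> bool}.

Lemma ev_Neg s w : ev (Neg s) I w <-> exists a, ev s I a /\ w = Defs.app (I NNeg) a.
Proof.
  simpl. split.
  - intros (f & a & -> & Ha & ->). eauto.
  - intros (a & Ha & ->). exists (I NNeg), a. auto.
Qed.

Lemma ev_Eqt {sg} (a b : tm sg) w :
  ev (Eqt a b) I w <-> exists x y, ev a I x /\ ev b I y /\
     w = Defs.app (Defs.app (I (NEq sg)) x) y.
Proof.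
  simpl. split.
  - intros (f & y & (g & x & -> & Hx & ->) & Hy & ->). eauto.
  - intros (x & y & Hx & Hy & ->).
    exists (Defs.app (I (NEq sg)) x), y. split; [exists (I (NEq sg)), x|]; auto.
Qed.

Hypothesis HL : logical I tv.

Lemma holds_Neg s : holds I tv (Neg s) <-> exists a, ev s I a /\ tv a = false.
Proof.
  destruct HL as (_ & _ & _ & Hneg & _). unfold holds. split.
  - intros (w & Hw & Ht). apply ev_Neg in Hw as (a & Ha & ->).
    rewrite Hneg in Ht. exists a. split; [exact Ha|]. destruct (tv a); easy.
  - intros (a & Ha & Ht). exists (Defs.app (I NNeg) a).
    split; [apply ev_Neg; eauto|]. rewrite Hneg, Ht. reflexivity.
Qed.

Lemma holds_Eqt {sg} (a b : tm sg) :
  holds I tv (Eqt a b) <-> exists x, ev a I x /\ ev b I x.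
Proof.
  destruct HL as (_ & _ & _ & _ & Heq). unfold holds. split.
  - intros (w & Hw & Ht). apply ev_Eqt in Hw as (x & y & Hx & Hy & ->).
    apply Heq in Ht as <-. eauto.
  - intros (x & Hx & Hy). eexists. split; [apply ev_Eqt; eauto|]. apply Heq. reflexivity.
Qed.

Lemma holds_Neqt {sg} (a b : tm sg) :
  holds I tv (Neqt a b) <-> exists x y, ev a I x /\ ev b I y /\ x <> y.
Proof.
  pose proof HL as (_ & _ & _ & _ & Heq). unfold Neqt. rewrite holds_Neg. split.
  - intros (w & Hw & Ht). apply ev_Eqt in Hw as (x & y & Hx & Hy & ->).
    exists x, y. repeat split; auto. intros E. apply Heq in E. congruence.
  - intros (x & y & Hx & Hy & Hxy). eexists. split; [apply ev_Eqt; eauto|].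
    destruct (tv _) eqn:E; [apply Heq in E; contradiction|reflexivity].
Qed.

Lemma holds_or_holds_Neg s : holds I tv s \/ holds I tv (Neg s).
Proof.
  destruct (proj1 HL o s) as [a Ha]. destruct (tv a) eqn:E.
  - left. exists a. auto.
  - right. apply holds_Neg. eauto.
Qed.

(* Congruence of application, read contrapositively: different values of the
   two spines come from different values of some pair of arguments. *)
Lemma Spines_holds_Neqt {x s} {u v : tm s} {l a b} : Spines x u v l ->
  ev u I a -> ev v I b -> a <> b -> exists d, In d l /\ holds I tv d.
Proof.
  intros HS. revert a b.
  induction HS as [|s t u v p q l HS IH]; intros f g Hf Hg Hfg.
  - simpl in Hf, Hg. congruence.
  - destruct Hf as (f' & c & Hf' & Hc & ->), Hg as (g' & e & Hg' & He & ->).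
    destruct (classic (f' = g')) as [<-|Hne].
    + exists (Neqt p q). split; [apply in_or_app; simpl; auto|].
      apply holds_Neqt. exists c, e. repeat split; auto. congruence.
    + destruct (IH f' g' Hf' Hg' Hne) as (d & Hd & Hdh).
      exists d. split; [apply in_or_app|]; auto.
Qed.

Lemma ev_nf_App {nf} (Hnf : NormAx nf) {sg tau} {s : tm (Arr sg tau)} {u : tm sg} {f a} :
  ev s I f -> ev u I a -> ev (nf _ (App s u)) I (Defs.app f a).
Proof.
  intros Hs Hu. apply (nf_sound Hnf (proj1 HL)). simpl. eauto.
Qed.

End Semantics.

Lemma upd_same F (I : asg F) x a : upd I x a x = a.
Proof.
  unfold upd. destruct (name_eq_dec x x) as [e|]; [|congruence].
  rewrite <- (eq_rect_eq_dec name_eq_dec). reflexivity.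
Qed.

Lemma upd_other F (I : asg F) x a y : x <> y -> upd I x a y = I y.
Proof. unfold upd. destruct (name_eq_dec x y); congruence. Qed.

Lemma ev_agree F s (t : tm s) : forall (I J : asg F),
  (forall x, free_in x t -> I x = J x) -> forall a, ev t I a <-> ev t J a.
Proof.
  induction t as [x|s1 s2 t1 IH1 t2 IH2|x s1 t IH]; intros I J H a; simpl.
  - rewrite H; [tauto|reflexivity].
  - assert (E1 : forall f, ev t1 I f <-> ev t1 J f) by (apply IH1; simpl in H; auto).
    assert (E2 : forall b, ev t2 I b <-> ev t2 J b) by (apply IH2; simpl in H; auto).
    split; intros (f & b & Hf & Hb & ->); exists f, b;
      rewrite ?E1, ?E2 in *; auto.
  - assert (E : forall b y, free_in y t -> upd I x b y = upd J x b y).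
    { intros b y Hy. unfold upd. destruct (name_eq_dec x y); [reflexivity|].
      apply H. simpl. auto. }
    split; intros Ha b; [rewrite <- IH|rewrite IH]; eauto.
Qed.

Lemma ev_upd_fresh F (I : asg F) y b s (t : tm s) a :
  ~ free_in y t -> ev t (upd I y b) a <-> ev t I a.
Proof.
  intros Hy. apply ev_agree. intros x Hx. apply upd_other. congruence.
Qed.

Lemma logical_upd {F} {I : asg F} {tv} sg n a :
  logical I tv -> logical (upd I (NVar sg n) a) tv.
Proof.
  intros (Hint & Hinj & Hsurj & Hneg & Heq).
  refine (conj _ (conj Hinj (conj Hsurj (conj _ _)))).
  - intros s t. destruct (Hint _ (Lam (NVar sg n) t)) as [f Hf].
    exists (Defs.app f a). apply Hf.
  - intros w. rewrite upd_other by discriminate. apply Hneg.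
  - intros s w w'. rewrite upd_other by discriminate. apply Heq.
Qed.

Definition finsat (A : tm o -> Prop) : Prop :=
  forall l, (forall u, In u l -> A u) -> satisfiable (fun u => In u l).

Definition sound_rule (k : list (tm o)) (cs : list (list (tm o))) : Prop :=
  forall F (I : asg F) tv, logical I tv -> holds_all I tv k ->
    exists c, In c cs /\ holds_all I tv c.

Lemma list_split_by (A P : tm o -> Prop) l : (forall u, In u l -> A u \/ P u) ->
  exists l', (forall u, In u l' -> A u) /\ forall u, In u l -> In u l' \/ P u.
Proof.
  induction l as [|a l IH]; intros H; [exists nil; simpl; tauto|].
  destruct IH as (l' & HA & Hl); [intros; apply H; simpl; auto|].
  destruct (H a (or_introl eq_refl)) as [Ha|Ha].
  - exists (a :: l'). split; [intros u [<-|Hu]; auto|].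
    intros u [<-|Hu]; [simpl; auto|]. destruct (Hl u Hu); simpl; auto.
  - exists l'. split; [exact HA|]. intros u [<-|Hu]; auto.
Qed.

Lemma not_finsat_extend {A c} : ~ finsat (extend A c) ->
  exists L, (forall u, In u L -> A u) /\
    forall F (I : asg F) tv, logical I tv -> holds_all I tv L -> ~ holds_all I tv c.
Proof.
  intro H. apply not_all_ex_not in H as [l Hl]. apply imply_to_and in Hl as [Hl Hns].
  destruct (list_split_by _ _ _ Hl) as (L & HLA & HlL). exists L. split; [exact HLA|].
  intros F I tv Hlog HL Hc. apply Hns. exists F, I, tv. split; [exact Hlog|].
  intros u Hu. destruct (HlL u Hu); [apply HL|apply Hc]; auto.
Qed.

Lemma finsat_sound_rule {A k cs} : finsat A -> (forall u, In u k -> A u) ->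
  sound_rule k cs -> exists c, In c cs /\ finsat (extend A c).
Proof.
  intros HA. revert k. induction cs as [|c cs IH]; intros k Hk Hsound.
  - destruct (HA k Hk) as (F & I & tv & Hlog & Hks).
    destruct (Hsound F I tv Hlog Hks) as (c & [] & _).
  - destruct (classic (finsat (extend A c))) as [Hc|Hc]; [exists c; simpl; auto|].
    destruct (not_finsat_extend Hc) as (L & HLA & HLc).
    destruct (IH (k ++ L)) as (c' & Hc' & Hf); [..|exists c'; simpl; auto].
    + intros u Hu. apply in_app_or in Hu as [Hu|Hu]; auto.
    + intros F I tv Hlog HkL.
      destruct (Hsound F I tv Hlog) as (c' & [<-|Hc'] & Hs');
        [intros u Hu; apply HkL, in_or_app; auto| |eauto].
      exfalso. apply (HLc F I tv Hlog); [intros u Hu; apply HkL, in_or_app; auto|exact Hs'].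
Qed.

Lemma sound_rule_singletons k l :
  (forall F (I : asg F) tv, logical I tv -> holds_all I tv k ->
     exists d, In d l /\ holds I tv d) ->
  sound_rule k (map (fun d => [d]) l).
Proof.
  intros H F I tv HL Hk. destruct (H F I tv HL Hk) as (d & Hd & Hdh).
  exists [d]. split; [apply in_map_iff; eauto|]. intros u [<-|[]]. exact Hdh.
Qed.

Lemma sound_excluded_middle s : sound_rule [] [[s]; [Neg s]].
Proof.
  intros F I tv HL _. destruct (holds_or_holds_Neg HL s) as [H|H];
    [exists [s]|exists [Neg s]]; split; simpl; auto; intros u [<-|[]]; exact H.
Qed.

Lemma sound_DN s : sound_rule [Neg (Neg s)] [[s]].
Proof.
  intros F I tv HL Hk. exists [s]. split; [simpl; auto|]. intros u [<-|[]].
  destruct (proj1 (holds_Neg HL _) (Hk _ (in_eq _ _))) as (a & Ha & Ht).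
  apply ev_Neg in Ha as (b & Hb & ->).
  destruct HL as (_ & _ & _ & Hneg & _). rewrite Hneg in Ht.
  exists b. split; [exact Hb|]. destruct (tv b); easy.
Qed.

Lemma sound_BQ (s t : tm o) : sound_rule [Eqt s t] [[s; t]; [Neg s; Neg t]].
Proof.
  intros F I tv HL Hk.
  destruct (proj1 (holds_Eqt HL _ _) (Hk _ (in_eq _ _))) as (x & Hs & Ht).
  destruct (tv x) eqn:E; [exists [s; t]|exists [Neg s; Neg t]];
    (split; [simpl; auto|]); intros u [<-|[<-|[]]];
    solve [exists x; auto | apply (holds_Neg HL); eauto].
Qed.

Lemma sound_BE (s t : tm o) : sound_rule [Neqt s t] [[s; Neg t]; [Neg s; t]].
Proof.
  intros F I tv HL Hk.
  destruct (proj1 (holds_Neqt HL _ _) (Hk _ (in_eq _ _))) as (x & y & Hs & Ht & Hxy).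
  pose proof HL as (_ & Hinj & _).
  assert (Htv : tv x <> tv y) by (intros E; apply Hxy, Hinj, E).
  destruct (tv x) eqn:Ex, (tv y) eqn:Ey; try congruence;
    [exists [s; Neg t]|exists [Neg s; t]]; (split; [simpl; auto|]);
    intros u [<-|[<-|[]]]; solve [eexists; eauto | apply (holds_Neg HL); eauto].
Qed.

Lemma sound_FQ {nf} (Hnf : NormAx nf) {sg tau} (s t : tm (Arr sg tau)) (u : tm sg) :
  sound_rule [Eqt s t] [[Eqt (nf _ (App s u)) (nf _ (App t u))]].
Proof.
  intros F I tv HL Hk. exists [Eqt (nf _ (App s u)) (nf _ (App t u))].
  split; [simpl; auto|]. intros w [<-|[]].
  destruct (proj1 (holds_Eqt HL _ _) (Hk _ (in_eq _ _))) as (f & Hs & Ht).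
  destruct (proj1 HL _ u) as [a Ha].
  apply (holds_Eqt HL). exists (Defs.app f a). split; apply (ev_nf_App HL Hnf); auto.
Qed.

Lemma sound_Mat {x} {u v : tm o} {l} : Spines x u v l ->
  sound_rule [u; Neg v] (map (fun d => [d]) l).
Proof.
  intros HS. apply sound_rule_singletons. intros F I tv HL Hk.
  destruct (Hk u (in_eq _ _)) as (a & Ha & Hta).
  destruct (proj1 (holds_Neg HL v) (Hk _ (in_cons _ _ _ (in_eq _ _)))) as (b & Hb & Htb).
  apply (Spines_holds_Neqt HL HS Ha Hb). congruence.
Qed.

Lemma sound_Dec {x al} {u v : tm al} {l} : Spines x u v l ->
  sound_rule [Neqt u v] (map (fun d => [d]) l).
Proof.
  intros HS. apply sound_rule_singletons. intros F I tv HL Hk.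
  destruct (proj1 (holds_Neqt HL u v) (Hk _ (in_eq _ _))) as (a & b & Ha & Hb & Hab).
  exact (Spines_holds_Neqt HL HS Ha Hb Hab).
Qed.

Lemma sound_Con {al} (s t u v : tm al) :
  sound_rule [Eqt s t; Neqt u v] [[Neqt s u; Neqt t u]; [Neqt s v; Neqt t v]].
Proof.
  intros F I tv HL Hk.
  destruct (proj1 (holds_Eqt HL s t) (Hk _ (in_eq _ _))) as (x & Hs & Ht).
  destruct (proj1 (holds_Neqt HL u v) (Hk _ (in_cons _ _ _ (in_eq _ _))))
    as (a & b & Hu & Hv & Hab).
  destruct (classic (x = a)) as [<-|Hxa];
    [exists [Neqt s v; Neqt t v]|exists [Neqt s u; Neqt t u]];
    (split; [simpl; auto|]); intros w [<-|[<-|[]]]; apply (holds_Neqt HL); eauto.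
Qed.

Lemma finsat_FE {nf} (Hnf : NormAx nf) {A sg tau} {s t : tm (Arr sg tau)} {n} :
  finsat A -> A (Neqt s t) -> (forall f, A f -> ~ free_in (NVar sg n) f) ->
  finsat (extend A [Neqt (nf _ (App s (Nm (NVar sg n) : tm sg)))
                         (nf _ (App t (Nm (NVar sg n) : tm sg)))]).
Proof.
  intros HA Hst Hfresh l Hl.
  destruct (list_split_by _ _ _ Hl) as (l' & Hl'A & Hll').
  destruct (HA (Neqt s t :: l')) as (F & I & tv & HL & Hk); [intros u [<-|Hu]; auto|].
  destruct (proj1 (holds_Neqt HL s t) (Hk _ (in_eq _ _))) as (f & g & Hs & Ht & Hfg).
  assert (Hc : exists c, Defs.app f c <> Defs.app g c).
  { apply NNPP. intros Hno. apply Hfg, app_ext. intros c. apply NNPP. eauto. }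
  destruct Hc as [c Hc].
  assert (Hy : ~ free_in (NVar sg n) s /\ ~ free_in (NVar sg n) t)
    by (pose proof (Hfresh _ Hst) as Hy; simpl in Hy; tauto).
  pose proof (logical_upd sg n c HL) as HL'.
  exists F, (upd I (NVar sg n) c), tv. split; [exact HL'|].
  intros w Hw. destruct (Hll' w Hw) as [Hw'|[<-|[]]].
  - destruct (Hk w (in_cons _ _ _ Hw')) as (a & Ha & Hta).
    exists a. split; [apply ev_upd_fresh; eauto|exact Hta].
  - apply (holds_Neqt HL'). exists (Defs.app f c), (Defs.app g c).
    assert (Hn : ev (Nm (NVar sg n) : tm sg) (upd I (NVar sg n) c) c)
      by (symmetry; apply upd_same).
    repeat split; [..|exact Hc]; apply (ev_nf_App HL' Hnf); auto;
      apply ev_upd_fresh; tauto.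
Qed.

Section Gcomp.

Context {nf : nfop} (Hnf : NormAx nf).

Lemma Gcomp_sub {A B : tm o -> Prop} :
  (forall u, B u -> A u) -> Gcomp nf A -> Gcomp nf B.
Proof.
  intros HBA (Hb & Hp & Hf). split; [|split].
  - intros u Hu. auto.
  - exact (suff_pure_sub HBA Hp).
  - intros l Hl. auto.
Qed.

Lemma Gcomp_extend A c : Gcomp nf A -> (forall u, In u c -> normal nf u) ->
  finsat (extend A c) -> Gcomp nf (extend A c).
Proof.
  intros (Hb & Hp & _) Hc Hf. split; [|split; [apply suff_pure_extend; exact Hp|exact Hf]].
  intros u [Hu|Hu]; auto.
Qed.

Lemma Gcomp_add1 A a : Gcomp nf (extend A [a]) -> Gcomp nf (add A a).
Proof. apply Gcomp_sub. intros u [Hu| ->]; [left|right; left]; auto. Qed.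

Lemma Gcomp_add2 A a b : Gcomp nf (extend A [a; b]) -> Gcomp nf (add (add A a) b).
Proof.
  apply Gcomp_sub. intros u [[Hu| ->]| ->]; [left|right; left|right; right; left]; auto.
Qed.

Lemma Gcomp_sound_rule {A k cs} : sound_rule k cs -> Gcomp nf A ->
  (forall u, In u k -> A u) -> (forall c u, In c cs -> In u c -> normal nf u) ->
  exists c, In c cs /\ Gcomp nf (extend A c).
Proof.
  intros Hsound HA Hk Hcs.
  destruct (finsat_sound_rule (proj2 (proj2 HA)) Hk Hsound) as (c & Hc & Hf).
  exists c. split; [exact Hc|]. apply Gcomp_extend; eauto.
Qed.

Lemma Gcomp_sound_rule_singletons {A k l} : sound_rule k (map (fun d => [d]) l) ->
  Gcomp nf A -> (forall u, In u k -> A u) -> (forall d, In d l -> normal nf d) ->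
  l <> nil /\ exists d, In d l /\ Gcomp nf (add A d).
Proof.
  intros Hsound HA Hk Hl.
  destruct (Gcomp_sound_rule Hsound HA Hk) as (c & Hc & HAc).
  - intros c u Hc Hu. apply in_map_iff in Hc as (d & <- & Hd).
    destruct Hu as [<-|[]]. auto.
  - apply in_map_iff in Hc as (d & <- & Hd).
    split; [intros ->; contradiction|]. exists d. split; [exact Hd|].
    apply Gcomp_add1. exact HAc.
Qed.

Lemma Gcomp_DN {A s} : Gcomp nf A -> A (Neg (Neg s)) -> Gcomp nf (add A s).
Proof.
  intros HA H. destruct (Gcomp_sound_rule (sound_DN s) HA) as (c & [<-|[]] & Hc).
  - intros u [<-|[]]. exact H.
  - intros c u [<-|[]] [<-|[]].
    pose proof (proj1 HA _ H) as Hn. rewrite !(normal_Neg_iff Hnf) in Hn. exact Hn.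
  - apply Gcomp_add1. exact Hc.
Qed.

Lemma Gcomp_BQ {A} {s t : tm o} : Gcomp nf A -> A (Eqt s t) ->
  Gcomp nf (add (add A s) t) \/ Gcomp nf (add (add A (Neg s)) (Neg t)).
Proof.
  intros HA H. destruct (proj1 (normal_Eqt_iff Hnf s t) (proj1 HA _ H)) as [Hs Ht].
  destruct (Gcomp_sound_rule (sound_BQ s t) HA) as (c & [<-|[<-|[]]] & Hc).
  - intros u [<-|[]]. exact H.
  - intros c u [<-|[<-|[]]] [<-|[<-|[]]]; rewrite ?(normal_Neg_iff Hnf); assumption.
  - left. apply Gcomp_add2. exact Hc.
  - right. apply Gcomp_add2. exact Hc.
Qed.

Lemma Gcomp_BE {A} {s t : tm o} : Gcomp nf A -> A (Neqt s t) ->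
  Gcomp nf (add (add A s) (Neg t)) \/ Gcomp nf (add (add A (Neg s)) t).
Proof.
  intros HA H. destruct (proj1 (normal_Neqt_iff Hnf s t) (proj1 HA _ H)) as [Hs Ht].
  destruct (Gcomp_sound_rule (sound_BE s t) HA) as (c & [<-|[<-|[]]] & Hc).
  - intros u [<-|[]]. exact H.
  - intros c u [<-|[<-|[]]] [<-|[<-|[]]]; rewrite ?(normal_Neg_iff Hnf); assumption.
  - left. apply Gcomp_add2. exact Hc.
  - right. apply Gcomp_add2. exact Hc.
Qed.

Lemma Gcomp_FQ {A sg tau} {s t : tm (Arr sg tau)} (u : tm sg) : Gcomp nf A -> A (Eqt s t) ->
  Gcomp nf (add A (Eqt (nf _ (App s u)) (nf _ (App t u)))).
Proof.
  intros HA H. destruct (Gcomp_sound_rule (sound_FQ Hnf s t u) HA) as (c & [<-|[]] & Hc).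
  - intros w [<-|[]]. exact H.
  - intros c w [<-|[]] [<-|[]]. apply (normal_Eqt_iff Hnf). split; apply (nf_idem Hnf).
  - apply Gcomp_add1. exact Hc.
Qed.

Lemma Gcomp_FE {A sg tau} {s t : tm (Arr sg tau)} : Gcomp nf A -> A (Neqt s t) ->
  exists n, Gcomp nf (add A (Neqt (nf _ (App s (Nm (NVar sg n) : tm sg)))
                                  (nf _ (App t (Nm (NVar sg n) : tm sg))))).
Proof.
  intros HA H. destruct (proj1 (proj2 HA) sg 0) as (n & _ & Hn). exists n.
  apply Gcomp_add1, Gcomp_extend; [exact HA| |].
  - intros w [<-|[]]. apply (normal_Neqt_iff Hnf). split; apply (nf_idem Hnf).
  - apply finsat_FE; [exact Hnf|exact (proj2 (proj2 HA))|exact H|].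
    intros f Hf Hfree. eauto.
Qed.

Lemma Gcomp_Mat {A x} {u v : tm o} {l} : Spines x u v l -> Gcomp nf A ->
  A u -> A (Neg v) -> l <> nil /\ exists d, In d l /\ Gcomp nf (add A d).
Proof.
  intros HS HA Hu Hv. apply (Gcomp_sound_rule_singletons (sound_Mat HS) HA).
  - intros w [<-|[<-|[]]]; assumption.
  - apply (Spines_normal Hnf HS); [exact (proj1 HA _ Hu)|].
    apply (normal_Neg_iff Hnf), (proj1 HA _ Hv).
Qed.

Lemma Gcomp_Dec {A x al} {u v : tm al} {l} : is_sort al -> Spines x u v l -> Gcomp nf A ->
  A (Neqt u v) -> l <> nil /\ exists d, In d l /\ Gcomp nf (add A d).
Proof.
  intros [k ->] HS HA H. apply (Gcomp_sound_rule_singletons (sound_Dec HS) HA).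
  - intros w [<-|[]]. exact H.
  - destruct (proj1 (normal_Neqt_iff Hnf u v) (proj1 HA _ H)) as [Hu Hv].
    exact (Spines_normal Hnf HS Hu Hv).
Qed.

Lemma Gcomp_Con {A al} {s t u v : tm al} : Gcomp nf A -> A (Eqt s t) -> A (Neqt u v) ->
  Gcomp nf (add (add A (Neqt s u)) (Neqt t u)) \/
  Gcomp nf (add (add A (Neqt s v)) (Neqt t v)).
Proof.
  intros HA Hst Huv.
  destruct (proj1 (normal_Eqt_iff Hnf s t) (proj1 HA _ Hst)) as [Hs Ht].
  destruct (proj1 (normal_Neqt_iff Hnf u v) (proj1 HA _ Huv)) as [Hu Hv].
  destruct (Gcomp_sound_rule (sound_Con s t u v) HA) as (c & [<-|[<-|[]]] & Hc).
  - intros w [<-|[<-|[]]]; assumption.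
  - intros c w [<-|[<-|[]]] [<-|[<-|[]]]; apply (normal_Neqt_iff Hnf); auto.
  - left. apply Gcomp_add2. exact Hc.
  - right. apply Gcomp_add2. exact Hc.
Qed.

Lemma Gcomp_complete {A s} : Gcomp nf A -> normal nf s ->
  Gcomp nf (add A s) \/ Gcomp nf (add A (Neg s)).
Proof.
  intros HA Hs.
  destruct (Gcomp_sound_rule (sound_excluded_middle s) HA) as (c & [<-|[<-|[]]] & Hc).
  - intros u [].
  - intros c u [<-|[<-|[]]] [<-|[]]; rewrite ?(normal_Neg_iff Hnf); exact Hs.
  - left. apply Gcomp_add1. exact Hc.
  - right. apply Gcomp_add1. exact Hc.
Qed.

End Gcomp.

Theorem lemma10p2 (nf : nfop) (Hnf : NormAx nf) :
  ACC nf (Gcomp nf) /\ complete_class nf (Gcomp nf).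
Proof.
  split; [|intros A HA s Hs; exact (Gcomp_complete Hnf HA Hs)].
  intros A HA.
  refine (conj _ (conj _ (conj _ (conj _ (conj _ (conj _ (conj _ _))))))).
  - intros s H. exact (Gcomp_DN Hnf HA H).
  - intros s t H. exact (Gcomp_BQ Hnf HA H).
  - intros s t H. exact (Gcomp_BE Hnf HA H).
  - intros sg tau s t H u _. exact (Gcomp_FQ Hnf u HA H).
  - intros sg tau s t H. exact (Gcomp_FE Hnf HA H).
  - intros x u v l _ HS Hu Hv. exact (Gcomp_Mat Hnf HS HA Hu Hv).
  - intros x al u v l _ Hal HS H. exact (Gcomp_Dec Hnf Hal HS HA H).
  - intros al s t u v _ Hst Huv. exact (Gcomp_Con Hnf HA Hst Huv).
Qed.
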